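(* In the setting described in the context, let $z\in\mathbb Z^{n(n-1)/2}$ and $g\in\{e_r,f_r,q^{\epsilon_r}\}$ (for admissible indices $r$). Then (i) $\mathcal D^{\bar v}([x-y]_q\, g\,T(v+z))=\mathcal D^{\bar v}([x-y]_q\, g\,T(v+\tau(z)))$ for all $z$; (ii) $\mathcal D^{\bar v}(g\,T(v+z))=-\mathcal D^{\bar v}(g\,T(v+\tau(z)))$ for all $z$ with $\tau(z)\neq z$.
   Context: Conventions. Fix $n\ge2$ and $q\in\mathbb C\setminus\{0,\pm1\}$ with a fixed $\ln q$; $q^x:=e^{x\ln q}$, $[x]_q:=\frac{q^x-q^{-x}}{q-q^{-1}}$, $1(q):=\{x\in\mathbb C:q^x=1\}$, and for $A\subseteq\mathbb Z$, $A+\frac{1(q)}2:=\{a+c/2: a\in A, c\in 1(q)\}$. Algebra. $P=\bigoplus_{i=1}^n\mathbb Z\epsilon_i$, $\langle\epsilon_i,\epsilon_j\rangle=\delta_{ij}$, $\alpha_i=\epsilon_i-\epsilon_{i+1}$. $U_q$ is the unital algebra generated by $e_i,f_i$ ($1\le i\le n-1$), $q^h$ ($h\in P$) with relations $q^0=1$, $q^hq^{h'}=q^{h+h'}$, $q^he_iq^{-h}=q^{\langle h,\alpha_i\rangle}e_i$, $q^hf_iq^{-h}=q^{-\langle h,\alpha_i\rangle}f_i$, $e_if_j-f_je_i=\delta_{ij}\frac{q^{\alpha_i}-q^{-\alpha_i}}{q-q^{-1}}$, quantum Serre relations $e_i^2e_j-(q+q^{-1})e_ie_je_i+e_je_i^2=0$,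 $f_i^2f_j-(q+q^{-1})f_if_jf_i+f_jf_i^2=0$ ($|i-j|=1$), and $e_ie_j=e_je_i$, $f_if_j=f_jf_i$ ($|i-j|>1$). Tableaux. For $w=(w_{rs})_{1\le s\le r\le n}$ (entries in $\mathbb C$ or in $\mathbb C(x,y)$), $T(w)$ is a formal symbol (Gelfand–Tsetlin tableau). $\delta^{rs}$ has $1$ at position $(r,s)$ and $0$ elsewhere; $\mathbb Z^{n(n-1)/2}$ denotes integer vectors supported on positions $(r,s)$ with $r\le n-1$. Relations. $\mathfrak V=\{(r,s):1\le s\le r\le n\}$. $\mathcal R$ is the set of formal relations $(r,s)\ge(r-1,t)$, $(r-1,t)>(r,s)$ ($2\le r\le n$, $1\le s\le r$, $1\le t\le r-1$) and $(n,s)\ge(n,t)$ ($s\ne t$). For $\mathcal C\subseteq\mathcal R$, $\mathfrak V(\mathcal C)$ is the set of points of $\mathfrak V$ occurring in relations of $\mathcal C$; $\mathcal C_1,\mathcal C_2$ are disconnected if $\mathfrak V(\mathcal C_1)\cap\mathfrak V(\mathcal C_2)=\emptyset$; $\mathcal C$ is indecomposable if it is not a union of two disconnected nonempty subsets. $p\succeq_{\mathcal C}p'$ means there is a chain $p=p_0,\dots,p_{m}=p'$ with each $p_a\ge p_{a+1}$ or $p_a>p_{a+1}$ in $\mathcal C$; $p\succ_{\mathcal C}p'$ if some link is strict. A cross is $\{(k,i)\ge(k-1,t),(k-1,s)>(k,j)\}$ with $i<j$, $s<t$. An indecomposable $\mathcal C$ is admissible if (i) for $2\le k\le n$, $(k,i)\succ_{\mathcal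 C}(k,j)$ only if $i<j$; (ii) $(n,i)\succeq_{\mathcal C}(n,j)$ only if $i<j$; (iii) $\mathcal C$ has no cross; (iv) for all $(k,i),(k,j)\in\mathfrak V(\mathcal C)$, $1\le k\le n-1$, $i<j$, there are $s,t$ with $\{(k,i)>(k+1,s),(k+1,s)\ge(k,j),(k,i)\ge(k-1,t),(k-1,t)>(k,j)\}\subseteq\mathcal C$, or with $s<t$ and $\{(k,i)>(k+1,s),(k+1,t)\ge(k,j)\}\subseteq\mathcal C$. A general $\mathcal C$ is admissible if every indecomposable component is. Satisfaction. $T(L)$ satisfies $(r,s)\ge(r',s')$ (resp. $>$) if $l_{rs}-l_{r's'}\in\mathbb Z_{\ge0}+\frac{1(q)}2$ (resp. $\mathbb Z_{>0}+\frac{1(q)}2$). $T(L)$ satisfies $\mathcal C$ if it satisfies all relations of $\mathcal C$ and $l_{ki}-l_{kj}\in\mathbb Z+\frac{1(q)}2$ ($i\neq j$) only if $(k,i),(k,j)$ lie in $\mathfrak V(\mathcal C')$ for one indecomposable component $\mathcal C'$. $\mathcal B_{\mathcal C}(T(L))=\{T(L+z):z\in\mathbb Z^{n(n-1)/2},\ T(L+z)\text{ satisfies }\mathcal C\}$. Gelfand–Tsetlin formulas: $q^{\epsilon_k}T(L)=q^{a_k}T(L)$, $a_k=\sum_{i=1}^kl_{ki}-\sum_{i=1}^{k-1}l_{k-1,i}+k$; $e_kT(L)=-\sum_{j=1}^k\frac{\prod_{i=1}^{k+1}[l_{k+1,i}-l_{kj}]_q}{\prod_{i\ne j}[l_{ki}-l_{kj}]_q}T(L+\delta^{kj})$;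 $f_kT(L)=\sum_{j=1}^k\frac{\prod_{i=1}^{k-1}[l_{k-1,i}-l_{kj}]_q}{\prod_{i\ne j}[l_{ki}-l_{kj}]_q}T(L-\delta^{kj})$, where terms whose tableau does not satisfy $\mathcal C$ are omitted. Standing data. $\mathcal C$ is admissible; $T(\bar v)$, $\bar v\in\mathbb C^{n(n+1)/2}$, is $(1,\mathcal C)$-singular: it satisfies $\mathcal C$ and there is exactly one triple $(k,i,j)$ with $1\le i<j\le k\le n-1$, $(k,i),(k,j)\notin\mathfrak V(\mathcal C)$ and $\bar v_{ki}-\bar v_{kj}\in\mathbb Z+\frac{1(q)}2$; moreover $\bar v_{ki}=\bar v_{kj}$. $\tau$ exchanges the $(k,i)$ and $(k,j)$ coordinates. $v$ is the vector with $v_{ki}=x$, $v_{kj}=y$ ($x,y$ indeterminates) and $v_{rs}=\bar v_{rs}$ otherwise; $V(T(v))=V_{\mathcal C}(T(v))$ is the $\mathbb C(x,y)$-space with basis $T(v+z)$, $T(\bar v+z)\in\mathcal B_{\mathcal C}(T(\bar v))$, with $U_q$ acting by the formulas above. $\overline{\mathcal H}$ is the set of $w$ with $w_{tr}\ne w_{ts}$ for all triples $(t,r,s)\ne(k,i,j)$, and $\mathcal F_{ij}$ is the space of rational functions (of $x,y$) smooth on $\overline{\mathcal H}$; $\mathcal F_{ij}\otimes V(T(v))$ is the set of finite sums $\sum f_zT(v+z)$, $f_z\in\mathcal F_{ij}$. For $f\in\mathcal F_{ij}$: $\mathrm{ev}(\bar v)(f)=f(\bar v)$ is the value at $x=\bar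 v_{ki},y=\bar v_{kj}$ and $\mathcal D^{\bar v}(f)=\frac{q-q^{-1}}{4\ln q}(\partial_xf-\partial_yf)(\bar v)$. $V_{\mathcal C}(T(\bar v))$ is the $\mathbb C$-space spanned by symbols $T(\bar v+z),\mathcal DT(\bar v+z)$ ($T(\bar v+z)\in\mathcal B_{\mathcal C}(T(\bar v))$) subject to $T(\bar v+z)=T(\bar v+\tau(z))$, $\mathcal DT(\bar v+z)+\mathcal DT(\bar v+\tau(z))=0$. On $\mathcal F_{ij}\otimes V(T(v))$: $\mathrm{ev}(\bar v)(fT(v+z))=f(\bar v)T(\bar v+z)$ and $\mathcal D^{\bar v}(fT(v+z))=\mathcal D^{\bar v}(f)T(\bar v+z)+f(\bar v)\mathcal DT(\bar v+z)$, extended linearly (both sides of the claim lie in $\mathcal F_{ij}\otimes V(T(v))$ before applying $\mathcal D^{\bar v}$). *)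

From Stdlib Require Import Reals ZArith List Arith Bool Relations ClassicalEpsilon.
From Coquelicot Require Import Coquelicot.
Import ListNotations.

Open Scope C_scope.
Local Open Scope bool_scope.

Definition cexp (z : C) : C :=
  ((exp (fst z) * cos (snd z))%R, (exp (fst z) * sin (snd z))%R).

Definition qpow (lnq x : C) : C := cexp (x * lnq).

Definition qnum (q lnq x : C) : C := (qpow lnq x - qpow lnq (- x)) / (q - / q).

Definition in_one_q (lnq c : C) : Prop := qpow lnq c = 1.

Definition in_Zge (lnq d : C) : Prop :=
  exists (m : Z) (c : C), (0 <= m)%Z /\ in_one_q lnq c /\ d = RtoC (IZR m) + c / 2.
Definition in_Zgt (lnq d : C) : Prop :=
  exists (m : Z) (c : C), (0 < m)%Z /\ in_one_q lnq c /\ d = RtoC (IZR m) + c / 2.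
Definition in_Z (lnq d : C) : Prop :=
  exists (m : Z) (c : C), in_one_q lnq c /\ d = RtoC (IZR m) + c / 2.

(* A Gelfand-Tsetlin tableau: entry (r,s), 1 <= s <= r <= n (1-based);
   values at other positions are irrelevant. *)
Definition tab := nat -> nat -> C.
(* integer vectors z in Z^{n(n-1)/2}: only positions (r,s) with r <= n-1
   are ever used (see [shift] and [idx_eqb]). *)
Definition idx := nat -> nat -> Z.

Definition shift (n : nat) (L : tab) (z : idx) : tab :=
  fun r s => L r s + (if r <? n then RtoC (IZR (z r s)) else 0).

Definition bump (z : idx) (r s : nat) (d : Z) : idx :=
  fun r' s' => if (r' =? r) && (s' =? s) then (z r' s' + d)%Z else z r' s'.

Definition idx_eqb (n : nat) (z w : idx) : bool :=
  forallb (fun r => forallb (fun s => Z.eqb (z r s) (w r s)) (seq 1 r)) (seq 1 (n - 1)%nat).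

Definition tau (k i j : nat) (z : idx) : idx :=
  fun r s => if (r =? k) && (s =? i) then z k j
             else if (r =? k) && (s =? j) then z k i else z r s.

Inductive grel : Type :=
| Rge : nat * nat -> nat * nat -> grel
| Rgt : nat * nat -> nat * nat -> grel.

Definition in_R (n : nat) (rho : grel) : Prop :=
  match rho with
  | Rge (r, s) (r', t) =>
      (2 <= r <= n /\ 1 <= s <= r /\ r' = (r - 1)%nat /\ 1 <= t <= r - 1)%nat
      \/ (r = n /\ r' = n /\ 1 <= s <= n /\ 1 <= t <= n /\ s <> t)%nat
  | Rgt (r', t) (r, s) =>
      (2 <= r <= n /\ 1 <= s <= r /\ r' = (r - 1)%nat /\ 1 <= t <= r - 1)%nat
  end.

Definition rset := grel -> Prop.

Definition pts (rho : grel) : list (nat * nat) :=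
  match rho with Rge p p' => [p; p'] | Rgt p p' => [p; p'] end.

Definition in_V (P : rset) (p : nat * nat) : Prop :=
  exists rho, P rho /\ In p (pts rho).

Definition disconnected (P1 P2 : rset) : Prop :=
  forall p, ~ (in_V P1 p /\ in_V P2 p).

Definition nonempty (P : rset) : Prop := exists rho, P rho.

Definition indecomposable (P : rset) : Prop :=
  ~ exists P1 P2 : rset, nonempty P1 /\ nonempty P2 /\
      (forall rho, P rho <-> (P1 rho \/ P2 rho)) /\ disconnected P1 P2.

Definition component (C P : rset) : Prop :=
  nonempty P /\ (forall rho, P rho -> C rho) /\ indecomposable P /\
  disconnected P (fun rho => C rho /\ ~ P rho).

Definition link (P : rset) (p p' : nat * nat) : Prop := P (Rge p p') \/ P (Rgt p p').

Definition succeq (P : rset) : relation (nat * nat) := clos_trans _ (link P).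

Definition succ (P : rset) (p p' : nat * nat) : Prop :=
  exists a b, clos_refl_trans _ (link P) p a /\ P (Rgt a b) /\
              clos_refl_trans _ (link P) b p'.

Definition has_cross (P : rset) : Prop :=
  exists k i j s t, (i < j)%nat /\ (s < t)%nat /\
    P (Rge (k, i) ((k - 1)%nat, t)) /\ P (Rgt ((k - 1)%nat, s) (k, j)).

Definition admissible_indec (n : nat) (P : rset) : Prop :=
  (forall k i j, (2 <= k <= n)%nat -> succ P (k, i) (k, j) -> (i < j)%nat) /\
  (forall i j, succeq P (n, i) (n, j) -> (i < j)%nat) /\
  ~ has_cross P /\
  (forall k i j, (1 <= k <= n - 1)%nat -> in_V P (k, i) -> in_V P (k, j) -> (i < j)%nat ->
     (exists s t, P (Rgt (k, i) ((k + 1)%nat, s)) /\ P (Rge ((k + 1)%nat, s) (k, j)) /\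
                  P (Rge (k, i) ((k - 1)%nat, t)) /\ P (Rgt ((k - 1)%nat, t) (k, j)))
     \/ (exists s t, (s < t)%nat /\ P (Rgt (k, i) ((k + 1)%nat, s)) /\ P (Rge ((k + 1)%nat, t) (k, j)))).

Definition admissible (n : nat) (C : rset) : Prop :=
  forall P, component C P -> admissible_indec n P.

Definition sat_rel (lnq : C) (L : tab) (rho : grel) : Prop :=
  match rho with
  | Rge (r, s) (r', s') => in_Zge lnq (L r s - L r' s')
  | Rgt (r, s) (r', s') => in_Zgt lnq (L r s - L r' s')
  end.

(* T(L) satisfies C, except that the integrality condition is not imposed on
   the singular pair (k0,i0),(k0,j0). *)
Definition sat_C_except (n : nat) (lnq : C) (Crel : rset) (L : tab) (k0 i0 j0 : nat) : Prop :=
  (forall rho, Crel rho -> sat_rel lnq L rho) /\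
  (forall k a b, (1 <= k <= n)%nat -> (1 <= a <= k)%nat -> (1 <= b <= k)%nat -> a <> b ->
     in_Z lnq (L k a - L k b) ->
     (k = k0 /\ ((a = i0 /\ b = j0) \/ (a = j0 /\ b = i0)))
     \/ exists P, component Crel P /\ in_V P (k, a) /\ in_V P (k, b)).

Definition one_C_singular (n : nat) (lnq : C) (Crel : rset) (vbar : tab) (k i j : nat) : Prop :=
  sat_C_except n lnq Crel vbar k i j /\
  (1 <= i < j /\ j <= k <= n - 1)%nat /\
  ~ in_V Crel (k, i) /\ ~ in_V Crel (k, j) /\
  in_Z lnq (vbar k i - vbar k j) /\
  (forall k' i' j', (1 <= i' < j' /\ j' <= k' <= n - 1)%nat ->
     ~ in_V Crel (k', i') -> ~ in_V Crel (k', j') ->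
     in_Z lnq (vbar k' i' - vbar k' j') -> k' = k /\ i' = i /\ j' = j) /\
  vbar k i = vbar k j.

Definition inB (n : nat) (lnq : C) (Crel : rset) (vbar : tab) (k i j : nat) (z : idx) : Prop :=
  sat_C_except n lnq Crel (shift n vbar z) k i j.

(* classical decision, used to omit terms whose tableau does not satisfy C *)
Definition pdec (P : Prop) : bool :=
  if excluded_middle_informative P then true else false.

(* entries of the generic tableau T(v+z), as functions of xy = (x,y) *)
Definition gent (n : nat) (vbar : tab) (k i j : nat) (z : idx) (xy : C * C) : tab :=
  fun r s => if (r =? k) && (s =? i) then fst xy + RtoC (IZR (z k i))
             else if (r =? k) && (s =? j) then snd xy + RtoC (IZR (z k j))
             else shift n vbar z r s.

Definition Cprod (l : list nat) (f : nat -> C) : C := fold_right (fun a acc => f a * acc) 1 l.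
Definition Csum (l : list nat) (f : nat -> C) : C := fold_right (fun a acc => f a + acc) 0 l.

Inductive gen : Type := GE (r : nat) | GF (r : nat) | GK (r : nat).

Definition valid_gen (n : nat) (g : gen) : Prop :=
  match g with
  | GE r => (1 <= r <= n - 1)%nat
  | GF r => (1 <= r <= n - 1)%nat
  | GK r => (1 <= r <= n)%nat
  end.

(* an element sum_w f_w T(v+w) of F_ij (x) V(T(v)), as a list of pairs (f_w, w) *)
Definition fsum := list ((C * C -> C) * idx).

Definition act (n : nat) (q lnq : C) (Crel : rset) (vbar : tab) (k i j : nat)
    (g : gen) (z : idx) : fsum :=
  let L := gent n vbar k i j z in
  let B := inB n lnq Crel vbar k i j in
  let den r jj xy := Cprod (filter (fun a => negb (a =? jj)) (seq 1 r))
                           (fun a => qnum q lnq (L xy r a - L xy r jj)) in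
  match g with
  | GE r =>
      flat_map (fun jj =>
        if pdec (B (bump z r jj 1)) then
          [((fun xy => - (Cprod (seq 1 (r + 1)%nat)
                              (fun a => qnum q lnq (L xy (r + 1)%nat a - L xy r jj))) / den r jj xy),
            bump z r jj 1)]
        else []) (seq 1 r)
  | GF r =>
      flat_map (fun jj =>
        if pdec (B (bump z r jj (-1))) then
          [((fun xy => (Cprod (seq 1 (r - 1)%nat)
                              (fun a => qnum q lnq (L xy (r - 1)%nat a - L xy r jj))) / den r jj xy),
            bump z r jj (-1))]
        else []) (seq 1 r)
  | GK r =>
      [((fun xy => qpow lnq (Csum (seq 1 r) (fun a => L xy r a)
                             - Csum (seq 1 (r - 1)%nat) (fun a => L xy (r - 1)%nat a)
                             + RtoC (INR r))), z)]
  end.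

Definition scale_qxy (q lnq : C) (S : fsum) : fsum :=
  map (fun fw => ((fun xy => qnum q lnq (fst xy - snd xy) * fst fw xy), snd fw)) S.

(* f in F_ij has value c = f(vbar) and D^vbar(f) = d at vbar = (xb,yb):
   the partial derivatives (complex) at vbar of the (smooth extension of) f are
   a and b, and d = (q-q^{-1})/(4 ln q) (a - b). *)
Definition has_val_D (q lnq : C) (xb yb : C) (f : C * C -> C) (c d : C) : Prop :=
  exists a b : C,
    filterlim (fun h : C => (f (xb + h, yb) - c) / h) (locally' 0) (locally a) /\
    filterlim (fun h : C => (f (xb, yb + h) - c) / h) (locally' 0) (locally b) /\
    d = (q - / q) / (4 * lnq) * (a - b).

(* an element of V_C(T(vbar)) as a list of triples (w, c, d) meaning
   sum c T(vbar+w) + d DT(vbar+w) in the free space on the symbols *)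
Definition qelt := list (idx * C * C).

(* D^vbar (sum_w f_w T(v+w)) = sum_w (D(f_w) T(vbar+w) + f_w(vbar) DT(vbar+w)),
   given the data (c_w, d_w) = (f_w(vbar), D^vbar(f_w)) *)
Definition D_image (S : fsum) (data : list (C * C)) : qelt :=
  map (fun p => let '((f, w), (c, d)) := p in (w, d, c)) (combine S data).

Definition qneg (u : qelt) : qelt := map (fun t => let '(w, a, b) := t in (w, - a, - b)) u.

Definition coefT (n : nat) (u : qelt) (w : idx) : C :=
  fold_right (fun t acc => let '(z, a, b) := t in (if idx_eqb n z w then a else 0) + acc) 0 u.
Definition coefD (n : nat) (u : qelt) (w : idx) : C :=
  fold_right (fun t acc => let '(z, a, b) := t in (if idx_eqb n z w then b else 0) + acc) 0 u.

Definition ind (n : nat) (z w : idx) : C := if idx_eqb n z w then 1 else 0.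

(* equality in V_C(T(vbar)): u - u' lies in the span of the relations
   T(vbar+z) - T(vbar+tau z) and DT(vbar+z) + DT(vbar+tau z), T(vbar+z) in B *)
Definition Qeq (n : nat) (lnq : C) (Crel : rset) (vbar : tab) (k i j : nat) (u u' : qelt) : Prop :=
  exists rels : list (idx * C * C),
    List.Forall (fun t => let '(z, a, b) := t in
              inB n lnq Crel vbar k i j z /\ inB n lnq Crel vbar k i j (tau k i j z)) rels /\
    forall w : idx,
      coefT n u w - coefT n u' w =
        fold_right (fun t acc => let '(z, a, b) := t in
                      a * (ind n z w - ind n (tau k i j z) w) + acc) 0 rels /\
      coefD n u w - coefD n u' w =
        fold_right (fun t acc => let '(z, a, b) := t in
                      b * (ind n z w + ind n (tau k i j z) w) + acc) 0 rels.

(* The exchange τ of the coordinates (k,i), (k,j) permutes the terms of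
   g T(v+z) into those of g T(v+τz), with the coefficient functions composed
   with the exchange x <-> y of the two variables.  Since v̄_ki = v̄_kj, this
   exchange keeps the value of a coefficient at v̄ and swaps its two partial
   derivatives, so it negates D^v̄; the factor [x-y]_q changes sign under it.
   The defining relations T(v̄+τw) = T(v̄+w), DT(v̄+τw) = -DT(v̄+w) of
   V_C(T(v̄)) then give (i) and (ii) term by term. *)
From Pilot Require Import Defs.
From Stdlib Require Import Reals ZArith List Arith.
From Coquelicot Require Import Coquelicot.
From Stdlib Require Import Lia Lra Permutation FunctionalExtensionality ClassicalEpsilon.
Import ListNotations.
Open Scope C_scope.

Section Limits.

Context {T : Type} {F : (T -> Prop) -> Prop} {FF : Filter F}.

Lemma filterlim_Cminus (f g : T -> C) (a b : C) :
  filterlim f F (locally a) -> filterlim g F (locally b) ->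
  filterlim (fun t => f t - g t) F (locally (a - b)).
Proof.
  intros Hf Hg.
  apply (filterlim_comp_2 (G := locally a) (H := locally (opp b)) f (fun t => opp (g t)) plus).
  - exact Hf.
  - eapply filterlim_comp; [exact Hg |].
    apply (filterlim_opp (K := C_AbsRing) (V := C_NormedModule)).
  - apply (filterlim_plus (K := C_AbsRing) (V := C_NormedModule)).
Qed.

Lemma filterlim_Cmult (f g : T -> C) (a b : C) :
  filterlim f F (locally a) -> filterlim g F (locally b) ->
  filterlim (fun t => f t * g t) F (locally (a * b)).
Proof.
  intros Hf Hg.
  apply (filterlim_comp_2 (G := locally a) (H := locally b) f g mult); [exact Hf | exact Hg |].
  intros P HP. apply locally_C in HP.
  destruct (filterlim_mult (K := C_AbsRing) a b P HP) as [Q R HQ HR HPQ].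
  exists Q R; [apply locally_C; exact HQ | apply locally_C; exact HR | exact HPQ].
Qed.

End Limits.

(* [has_val_D] takes its difference quotients along this filter: h -> 0
   through nonzero reals. *)
Definition realdir : (C -> Prop) -> Prop := filtermap RtoC (locally' 0%R).

Lemma realdir_proper : ProperFilter' realdir.
Proof.
  apply filtermap_proper_filter'. constructor; [| apply locally'_filter].
  intros [[e He] H]. apply (H (e / 2)%R); simpl; [| lra].
  change (Rabs (e / 2 + - 0) < e)%R. rewrite Ropp_0, Rplus_0_r, Rabs_right; lra.
Qed.

Lemma filterlim_realdir_id : filterlim (fun h : C => h) realdir (locally (RtoC 0)).
Proof.
  unfold filterlim, filter_le, filtermap, realdir. intros P [eps HP].
  exists eps. intros y Hy _. apply HP. split; [exact Hy |].
  change (Rabs (0 + - 0) < eps)%R. rewrite Ropp_0, Rplus_0_r, Rabs_R0. apply cond_pos.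
Qed.

Lemma filterlim_realdir_ext (f g : C -> C) (l : C) :
  (forall h : C, h <> 0 -> f h = g h) ->
  filterlim f realdir (locally l) -> filterlim g realdir (locally l).
Proof.
  intros Hfg. apply filterlim_ext_loc. exists (mkposreal 1 Rlt_0_1).
  intros x _ Hx. apply Hfg. intros E. exact (Hx (f_equal fst E)).
Qed.

Lemma filterlim_realdir_unique (f : C -> C) (a b : C) :
  filterlim f realdir (locally a) -> filterlim f realdir (locally b) -> a = b.
Proof.
  exact (filterlim_locally_unique (K := C_AbsRing) (V := C_NormedModule)
           (FF := realdir_proper) f a b).
Qed.

Lemma filterlim_realdir_div_const (K L : C) :
  filterlim (fun h => K / h) realdir (locally L) -> K = 0.
Proof.
  intros H.
  assert (HK : filterlim (fun _ => K) realdir (locally (0 * L))).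
  { eapply filterlim_realdir_ext; [| exact (filterlim_Cmult _ _ _ _ filterlim_realdir_id H)].
    intros h Hh. simpl. field. exact Hh. }
  rewrite (filterlim_realdir_unique _ _ _ (filterlim_const K) HK). ring.
Qed.

Definition diff_quot_lim (f : C -> C) (c a : C) : Prop :=
  filterlim (fun h => (f h - c) / h) realdir (locally a).

Lemma diff_quot_lim_value_unique f c c' a a' :
  diff_quot_lim f c a -> diff_quot_lim f c' a' -> c = c'.
Proof.
  intros Ha Ha'.
  assert (Hq : filterlim (fun h => (c' - c) / h) realdir (locally (a - a'))).
  { eapply filterlim_realdir_ext; [| exact (filterlim_Cminus _ _ _ _ Ha Ha')].
    intros h Hh. simpl. field. exact Hh. }
  apply filterlim_realdir_div_const in Hq.
  replace c' with (c + (c' - c)) by ring. rewrite Hq. ring.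
Qed.

Lemma diff_quot_lim_scale f c a s :
  diff_quot_lim f c a -> diff_quot_lim (fun h => s * f h) (s * c) (s * a).
Proof.
  intros Ha. eapply filterlim_realdir_ext;
    [| exact (filterlim_Cmult _ _ _ _ (filterlim_const s) Ha)].
  intros h Hh. simpl. field. exact Hh.
Qed.

Lemma has_val_D_unique q lnq x y f c d c' d' :
  has_val_D q lnq x y f c d -> has_val_D q lnq x y f c' d' -> c = c' /\ d = d'.
Proof.
  intros [a [b [Ha [Hb ->]]]] [a' [b' [Ha' [Hb' ->]]]].
  assert (Hc : c = c') by exact (diff_quot_lim_value_unique _ _ _ _ _ Ha Ha'). subst c'.
  rewrite (filterlim_realdir_unique _ _ _ Ha Ha'), (filterlim_realdir_unique _ _ _ Hb Hb').
  split; reflexivity.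
Qed.

(* Exchanging the variables exchanges the two partial derivatives. *)
Lemma has_val_D_swap q lnq x f c d s :
  has_val_D q lnq x x f c d ->
  has_val_D q lnq x x (fun xy => s * f (snd xy, fst xy)) (s * c) (- (s * d)).
Proof.
  intros [a [b [Ha [Hb ->]]]]. exists (s * b), (s * a).
  split; [| split].
  - exact (diff_quot_lim_scale (fun h => f (x, x + h)) _ _ s Hb).
  - exact (diff_quot_lim_scale (fun h => f (x + h, x)) _ _ s Ha).
  - ring.
Qed.

Lemma Permutation_Forall2_combine {A B} (R : A -> B -> Prop) l1 l2 d1 :
  Permutation l1 l2 -> Forall2 R l1 d1 ->
  exists d2, Forall2 R l2 d2 /\ Permutation (combine l1 d1) (combine l2 d2).
Proof.
  intros HP. revert d1.
  induction HP as [| x l1 l2 _ IH | x y l | l1 l2 l3 _ IH1 _ IH2]; intros d1 HF.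
  - inversion HF. exists []. split; constructor.
  - inversion HF as [| ? b ? d1' Hx Hl]; subst.
    destruct (IH _ Hl) as [d2 [Hd2 Hc]].
    exists (b :: d2). split; [constructor; assumption | apply perm_skip, Hc].
  - inversion HF as [| ? b ? d1' Hy Hl]; subst. inversion Hl as [| ? b' ? d1'' Hx Hl']; subst.
    exists (b' :: b :: d1''). split; [repeat constructor; assumption | apply perm_swap].
  - destruct (IH1 _ HF) as [d2 [H2 Hc2]]. destruct (IH2 _ H2) as [d3 [H3 Hc3]].
    exists d3. split; [exact H3 | eapply perm_trans; eassumption].
Qed.

Lemma Cprod_perm l l' f : Permutation l l' -> Cprod l f = Cprod l' f.
Proof. induction 1; simpl; [reflexivity | congruence | ring | congruence]. Qed.

Lemma Csum_perm l l' f : Permutation l l' -> Csum l f = Csum l' f.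
Proof. induction 1; simpl; [reflexivity | congruence | ring | congruence]. Qed.

Lemma Cprod_map g l f : Cprod (map g l) f = Cprod l (fun a => f (g a)).
Proof. induction l as [| a l IH]; simpl; congruence. Qed.

Lemma Csum_map g l f : Csum (map g l) f = Csum l (fun a => f (g a)).
Proof. induction l as [| a l IH]; simpl; congruence. Qed.

Lemma Cprod_ext l f g : (forall a, f a = g a) -> Cprod l f = Cprod l g.
Proof. intros H. induction l as [| a l IH]; simpl; congruence. Qed.

Lemma Cprod_filter p l f : Cprod (filter p l) f = Cprod l (fun a => if p a then f a else 1).
Proof.
  induction l as [| a l IH]; simpl; [reflexivity |].
  destruct (p a); simpl; rewrite IH; ring.
Qed.

Lemma flat_map_reindex_perm {A B} (sw : B -> B) (s : A -> A) (E E' : A -> list B) l :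
  Permutation (map s l) l -> (forall a, E' a = map sw (E (s a))) ->
  Permutation (flat_map E' l) (map sw (flat_map E l)).
Proof.
  intros Hs HE. rewrite (flat_map_ext _ _ HE), !flat_map_concat_map, concat_map, map_map.
  rewrite <- (map_map s (fun a => map sw (E a))).
  rewrite <- !flat_map_concat_map. apply Permutation_flat_map, Hs.
Qed.

Lemma pdec_iff (P Q : Prop) : (P <-> Q) -> pdec P = pdec Q.
Proof.
  intros H. unfold pdec.
  destruct (excluded_middle_informative P), (excluded_middle_informative Q); tauto.
Qed.

Lemma qnum_opp q lnq x y : qnum q lnq (x - y) = - qnum q lnq (y - x).
Proof.
  unfold qnum. replace (x - y) with (- (y - x)) by ring.
  replace (- - (y - x)) with (y - x) by ring. unfold Cdiv. ring.
Qed.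

Lemma coefT_perm n u u' w : Permutation u u' -> coefT n u w = coefT n u' w.
Proof.
  induction 1 as [| [[z a] b] | [[z a] b] [[z' a'] b'] | ]; simpl;
    [reflexivity | congruence | ring | congruence].
Qed.

Lemma coefD_perm n u u' w : Permutation u u' -> coefD n u w = coefD n u' w.
Proof.
  induction 1 as [| [[z a] b] | [[z a] b] [[z' a'] b'] | ]; simpl;
    [reflexivity | congruence | ring | congruence].
Qed.

Ltac case_eqb :=
  repeat match goal with
  | |- context [?a =? ?b] => destruct (Nat.eqb_spec a b)
  | H : context [?a =? ?b] |- _ => destruct (Nat.eqb_spec a b)
  end.

Section Exchange.

Variables (n : nat) (q lnq : C) (Crel : rset) (vbar : tab) (k i j : nat).
Hypothesis Hij : (1 <= i < j /\ j <= k <= n - 1)%nat.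
Hypothesis Hni : ~ in_V Crel (k, i).
Hypothesis Hnj : ~ in_V Crel (k, j).
Hypothesis Hvv : vbar k i = vbar k j.

Let inB' := inB n lnq Crel vbar k i j.
Let tau' := tau k i j.

Definition swap_col (r a : nat) : nat :=
  if r =? k then (if a =? i then j else if a =? j then i else a) else a.

Lemma swap_colK r a : swap_col r (swap_col r a) = a.
Proof. unfold swap_col. case_eqb; lia. Qed.

Lemma swap_col_inj r a b : swap_col r a = swap_col r b -> a = b.
Proof. intros E. rewrite <- (swap_colK r a), E, swap_colK. reflexivity. Qed.

Lemma swap_col_range r a : (1 <= a <= r)%nat -> (1 <= swap_col r a <= r)%nat.
Proof. unfold swap_col. case_eqb; lia. Qed.

Lemma swap_col_inV r a : in_V Crel (r, a) -> swap_col r a = a.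
Proof. intros H. unfold swap_col. case_eqb; subst; tauto. Qed.

Lemma swap_col_perm r : Permutation (map (swap_col r) (seq 1 r)) (seq 1 r).
Proof.
  apply Permutation_map_same_l.
  - apply FinFun.Injective_map_NoDup; [exact (swap_col_inj r) | apply seq_NoDup].
  - intros b Hb. apply in_map_iff in Hb as [a [<- Ha]].
    apply in_seq in Ha. apply in_seq. pose proof (swap_col_range r a). lia.
Qed.

Lemma Cprod_swap_col r f : Cprod (seq 1 r) (fun a => f (swap_col r a)) = Cprod (seq 1 r) f.
Proof. rewrite <- Cprod_map. apply Cprod_perm, swap_col_perm. Qed.

Lemma Csum_swap_col r f : Csum (seq 1 r) (fun a => f (swap_col r a)) = Csum (seq 1 r) f.
Proof. rewrite <- Csum_map. apply Csum_perm, swap_col_perm. Qed.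

Lemma tauK w : tau' (tau' w) = w.
Proof.
  extensionality r; extensionality s. unfold tau', tau.
  case_eqb; simpl; subst; auto; lia.
Qed.

Lemma bump_tau z r a d : bump (tau' z) r a d = tau' (bump z r (swap_col r a) d).
Proof.
  extensionality r'; extensionality s'. unfold bump, tau', tau, swap_col.
  case_eqb; simpl; subst; auto; lia.
Qed.

Lemma gent_tau z xy r s :
  gent n vbar k i j (tau' z) xy r s = gent n vbar k i j z (snd xy, fst xy) r (swap_col r s).
Proof. unfold gent, tau', tau, swap_col, Defs.shift. simpl. case_eqb; simpl; subst; auto; lia. Qed.

Lemma shift_tau w r s : Defs.shift n vbar (tau' w) r s = Defs.shift n vbar w r (swap_col r s).
Proof. unfold Defs.shift, tau', tau, swap_col. case_eqb; simpl; subst; rewrite ?Hvv; auto; lia. Qed.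

Lemma inB_tau w : inB' w -> inB' (tau' w).
Proof.
  intros [Hrel Hint]. split.
  - intros rho Hrho. specialize (Hrel rho Hrho).
    assert (Hfix : forall r s, In (r, s) (pts rho) -> swap_col r s = s).
    { intros r s Hp. apply swap_col_inV. exists rho. auto. }
    destruct rho as [[r s] [r' s'] | [r s] [r' s']]; simpl in *;
      rewrite !shift_tau, (Hfix r s), (Hfix r' s'); auto.
  - intros r a b Hr Ha Hb Hab HZ. rewrite !shift_tau in HZ.
    destruct (Hint r (swap_col r a) (swap_col r b) Hr (swap_col_range _ _ Ha)
                (swap_col_range _ _ Hb) (fun E => Hab (swap_col_inj _ _ _ E)) HZ)
      as [[-> Hpair] | [P [HP [Ha' Hb']]]].
    + left. split; [reflexivity |]. unfold swap_col in Hpair. rewrite Nat.eqb_refl in Hpair.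
      revert Hpair. case_eqb; lia.
    + right. exists P. split; [exact HP |].
      assert (Hfix : forall c, in_V P (r, swap_col r c) -> swap_col r c = c).
      { intros c [rho [Hrho Hin]]. rewrite <- (swap_colK r c) at 2.
        symmetry. apply swap_col_inV. exists rho. destruct HP as [_ [HPC _]]. auto. }
      rewrite <- (Hfix a Ha'), <- (Hfix b Hb'). auto.
Qed.

Lemma inB_tau_iff w : inB' (tau' w) <-> inB' w.
Proof. split; [intros H; rewrite <- (tauK w) | ]; apply inB_tau; assumption. Qed.

Lemma row_prod_tau z xy r r' jj (phi : C -> C) :
  Cprod (seq 1 r') (fun a => phi (gent n vbar k i j (tau' z) xy r' a
                                    - gent n vbar k i j (tau' z) xy r jj))
  = Cprod (seq 1 r') (fun a => phi (gent n vbar k i j z (snd xy, fst xy) r' a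
                                    - gent n vbar k i j z (snd xy, fst xy) r (swap_col r jj))).
Proof.
  rewrite <- Cprod_swap_col. apply Cprod_ext. intros a. rewrite !gent_tau, swap_colK. reflexivity.
Qed.

Lemma row_prod_except_tau z xy r jj (phi : C -> C) :
  Cprod (filter (fun a => negb (a =? jj)) (seq 1 r))
    (fun a => phi (gent n vbar k i j (tau' z) xy r a - gent n vbar k i j (tau' z) xy r jj))
  = Cprod (filter (fun a => negb (a =? swap_col r jj)) (seq 1 r))
    (fun a => phi (gent n vbar k i j z (snd xy, fst xy) r a
                   - gent n vbar k i j z (snd xy, fst xy) r (swap_col r jj))).
Proof.
  rewrite !Cprod_filter, <- Cprod_swap_col. apply Cprod_ext. intros a.
  rewrite !gent_tau, swap_colK.
  replace (swap_col r a =? jj) with (a =? swap_col r jj); [reflexivity |].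
  destruct (Nat.eqb_spec a (swap_col r jj)) as [-> | Hne].
  { rewrite swap_colK, !Nat.eqb_refl. reflexivity. }
  symmetry. apply Nat.eqb_neq. intros E. apply Hne. rewrite <- E, swap_colK. reflexivity.
Qed.

Lemma row_sum_tau z xy r :
  Csum (seq 1 r) (fun a => gent n vbar k i j (tau' z) xy r a)
  = Csum (seq 1 r) (fun a => gent n vbar k i j z (snd xy, fst xy) r a).
Proof.
  rewrite <- Csum_swap_col. unfold Csum. f_equal. extensionality a. rewrite gent_tau, swap_colK.
  reflexivity.
Qed.

Definition swap_term (s : C) (e : (C * C -> C) * idx) : (C * C -> C) * idx :=
  (fun xy => s * fst e (snd xy, fst xy), tau' (snd e)).

Lemma act_tau g z :
  Permutation (act n q lnq Crel vbar k i j g (tau' z))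
              (map (swap_term 1) (act n q lnq Crel vbar k i j g z)).
Proof.
  destruct g as [r | r | r]; unfold act.
  1, 2: apply (flat_map_reindex_perm _ (swap_col r)); [apply swap_col_perm |]; intros jj;
    rewrite bump_tau, (pdec_iff _ _ (inB_tau_iff _));
    destruct (pdec _); [| reflexivity];
    unfold swap_term; simpl; do 2 f_equal; extensionality xy;
    rewrite row_prod_tau, row_prod_except_tau, Cmult_1_l; reflexivity.
  apply Permutation_refl'. unfold swap_term; simpl. do 3 f_equal. extensionality xy.
  rewrite !row_sum_tau, Cmult_1_l. reflexivity.
Qed.

Lemma scale_qxy_act_tau g z :
  Permutation (scale_qxy q lnq (act n q lnq Crel vbar k i j g (tau' z)))
              (map (swap_term (- (1))) (scale_qxy q lnq (act n q lnq Crel vbar k i j g z))).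
Proof.
  unfold scale_qxy. eapply perm_trans; [apply Permutation_map, act_tau |].
  rewrite !map_map. apply Permutation_refl'. apply map_ext. intros [f w].
  unfold swap_term; simpl. f_equal. extensionality xy.
  rewrite (qnum_opp q lnq (fst xy)). ring.
Qed.

Lemma act_inB g z e : inB' z -> In e (act n q lnq Crel vbar k i j g z) -> inB' (snd e).
Proof.
  intros Hz He. destruct g as [r | r | r]; unfold act in He.
  1, 2: apply in_flat_map in He as [jj [_ Hjj]]; unfold pdec in Hjj;
    destruct (excluded_middle_informative _) as [HB |]; [| destruct Hjj];
    destruct Hjj as [<- | []]; exact HB.
  destruct He as [<- | []]. exact Hz.
Qed.

Definition tau_triple (s : C) (t : idx * C * C) : idx * C * C :=
  let '(w, a, b) := t in (tau' w, - (s * a), s * b).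

Lemma D_image_map_swap_term x s S dL dR :
  Forall2 (fun fw cd => has_val_D q lnq x x (fst fw) (fst cd) (snd cd)) S dL ->
  Forall2 (fun fw cd => has_val_D q lnq x x (fst fw) (fst cd) (snd cd)) (map (swap_term s) S) dR ->
  D_image (map (swap_term s) S) dR = map (tau_triple s) (D_image S dL).
Proof.
  intros HL. revert dR.
  induction HL as [| [f w] [c d] S dL Hfd HL IH]; intros dR HR;
    inversion HR as [| e' [c' d'] ? dR' Hfd' HR']; subst; [reflexivity |].
  simpl in Hfd, Hfd'.
  destruct (has_val_D_unique _ _ _ _ _ _ _ _ _ (has_val_D_swap _ _ _ _ _ _ s Hfd) Hfd') as [<- <-].
  unfold D_image in *. simpl. rewrite (IH _ HR'). reflexivity.
Qed.

Lemma D_image_perm_swap_term x s S S' dL dR :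
  Forall2 (fun fw cd => has_val_D q lnq x x (fst fw) (fst cd) (snd cd)) S dL ->
  Forall2 (fun fw cd => has_val_D q lnq x x (fst fw) (fst cd) (snd cd)) S' dR ->
  Permutation S' (map (swap_term s) S) ->
  Permutation (D_image S' dR) (map (tau_triple s) (D_image S dL)).
Proof.
  intros HL HR HP. destruct (Permutation_Forall2_combine _ _ _ _ HP HR) as [d2 [H2 Hc]].
  rewrite <- (D_image_map_swap_term x s S dL d2 HL H2). apply Permutation_map, Hc.
Qed.

Lemma D_image_inB S d :
  (forall e, In e S -> inB' (snd e)) -> forall t, In t (D_image S d) -> inB' (fst (fst t)).
Proof.
  intros HS t Ht. apply in_map_iff in Ht as [[[f w] [c dd]] [<- Hin]].
  exact (HS _ (in_combine_l _ _ _ _ Hin)).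
Qed.

Lemma qneg_map_tau_triple s u : qneg (map (tau_triple s) u) = map (tau_triple (- s)) u.
Proof.
  induction u as [| [[w a] b] u IH]; simpl; [reflexivity |].
  rewrite IH. do 3 f_equal; ring.
Qed.

Lemma coef_sub_tau_triple u w0 :
  coefT n u w0 - coefT n (map (tau_triple (- (1))) u) w0
  = fold_right (fun t acc => let '(z, a, b) := t in
                  a * (Defs.ind n z w0 - Defs.ind n (tau' z) w0) + acc) 0 u
  /\ coefD n u w0 - coefD n (map (tau_triple (- (1))) u) w0
  = fold_right (fun t acc => let '(z, a, b) := t in
                  b * (Defs.ind n z w0 + Defs.ind n (tau' z) w0) + acc) 0 u.
Proof.
  induction u as [| [[z a] b] u [IT ID]]; simpl; [split; ring |].
  rewrite <- IT, <- ID. unfold Defs.ind.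
  destruct (idx_eqb n z w0), (idx_eqb n (tau' z) w0); split; ring.
Qed.

(* [u] itself is the list of relations witnessing the equality. *)
Lemma Qeq_tau_triple u u' :
  (forall t, In t u -> inB' (fst (fst t))) ->
  Permutation u' (map (tau_triple (- (1))) u) ->
  Qeq n lnq Crel vbar k i j u u'.
Proof.
  intros Hu Hperm. exists u. split.
  - apply Forall_forall. intros [[w a] b] Ht. specialize (Hu _ Ht).
    split; [exact Hu | apply inB_tau, Hu].
  - intros w0. rewrite (coefT_perm _ _ _ w0 Hperm), (coefD_perm _ _ _ w0 Hperm).
    apply coef_sub_tau_triple.
Qed.

End Exchange.

Theorem proposition4p3
  (n : nat) (q lnq : C) (Crel : rset) (vbar : tab) (k i j : nat)
  (Hn : (2 <= n)%nat)
  (Hq0 : q <> 0) (Hq1 : q <> 1) (Hqm1 : q <> - (1))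
  (Hlnq : cexp lnq = q)
  (HCR : forall rho, Crel rho -> in_R n rho)
  (HCadm : admissible n Crel)
  (Hsing : one_C_singular n lnq Crel vbar k i j)
  (z : idx) (Hz : inB n lnq Crel vbar k i j z)
  (g : gen) (Hg : valid_gen n g) :
  (* (i) *)
  (forall dataL dataR : list (C * C),
     List.Forall2 (fun fw cd => has_val_D q lnq (vbar k i) (vbar k j) (fst fw) (fst cd) (snd cd))
       (scale_qxy q lnq (act n q lnq Crel vbar k i j g z)) dataL ->
     List.Forall2 (fun fw cd => has_val_D q lnq (vbar k i) (vbar k j) (fst fw) (fst cd) (snd cd))
       (scale_qxy q lnq (act n q lnq Crel vbar k i j g (tau k i j z))) dataR ->
     Qeq n lnq Crel vbar k i j
       (D_image (scale_qxy q lnq (act n q lnq Crel vbar k i j g z)) dataL)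
       (D_image (scale_qxy q lnq (act n q lnq Crel vbar k i j g (tau k i j z))) dataR))
  /\
  (* (ii) *)
  (idx_eqb n (tau k i j z) z = false ->
   forall dataL dataR : list (C * C),
     List.Forall2 (fun fw cd => has_val_D q lnq (vbar k i) (vbar k j) (fst fw) (fst cd) (snd cd))
       (act n q lnq Crel vbar k i j g z) dataL ->
     List.Forall2 (fun fw cd => has_val_D q lnq (vbar k i) (vbar k j) (fst fw) (fst cd) (snd cd))
       (act n q lnq Crel vbar k i j g (tau k i j z)) dataR ->
     Qeq n lnq Crel vbar k i j
       (D_image (act n q lnq Crel vbar k i j g z) dataL)
       (qneg (D_image (act n q lnq Crel vbar k i j g (tau k i j z)) dataR))).
Proof.
  destruct Hsing as [_ [Hij [Hni [Hnj [_ [_ Hvv]]]]]].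
  rewrite <- Hvv.
  pose proof (Qeq_tau_triple n lnq Crel vbar k i j Hij Hni Hnj Hvv) as HQeq.
  assert (Hterms : forall e, In e (act n q lnq Crel vbar k i j g z) ->
                             inB n lnq Crel vbar k i j (snd e))
    by (intros e; apply act_inB, Hz).
  split.
  - intros dL dR HL HR. apply HQeq.
    + apply D_image_inB. intros e He.
      apply in_map_iff in He as [e' [<- He']]. exact (Hterms e' He').
    + eapply D_image_perm_swap_term; [exact HL | exact HR |].
      apply scale_qxy_act_tau; assumption.
  - intros _ dL dR HL HR. apply HQeq.
    + exact (D_image_inB _ _ _ _ _ _ _ _ _ Hterms).
    + rewrite <- qneg_map_tau_triple. apply Permutation_map.
      eapply D_image_perm_swap_term; [exact HL | exact HR |].
      apply act_tau; assumption.
Qed.
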